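(* Let $(X^*,p^* )$ be a market equilibrium of $\mathcal M$, and let $X$ be the allocation with $x_{ij}=m_i/\sum_{i'\in A}m_{i'}$ for all $i\in A$, $j\in G$. Then for every agent $i$, $\mathrm{delay}_i(X^* )\le\mathrm{delay}_i(X)$, where $\mathrm{delay}_i(X)$ is taken to be $+\infty$ if $\mathbf x_i$ does not satisfy CC$(i)$.
   Context: A market $\mathcal M$: finite agent set $A$, finite goods set $G$ (supply $1$ each), finite index set $C$; agent $i$ has real coefficients $a_{ijk}$, requirements $r_{ik}\ge0$, delays $d_{ij}\ge0$, budget $m_i>0$. CC$(i)$: $\sum_ja_{ijk}x_{ij}\ge r_{ik}$ for all $k$, $x_{ij}\ge0$. $(X,p)$ is a market equilibrium if $\sum_ix_{ij}\le1$ for all $j$, each $\mathbf x_i$ minimizes $\sum_jd_{ij}x_{ij}$ subject to CC$(i)$ and $\sum_jp_jx_{ij}\le m_i$, and $\sum_ix_{ij}<1\Rightarrow p_j=0$. $\mathrm{delay}_i(X)=\sum_jd_{ij}x_{ij}$ when $\mathbf x_i$ satisfies CC$(i)$. *)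

From HB Require Import structures.
From mathcomp Require Import all_boot all_order all_algebra.
Set Implicit Arguments. Unset Strict Implicit. Unset Printing Implicit Defensive.
Import Order.TTheory GRing.Theory Num.Theory.
Local Open Scope ring_scope.

(* A market: agents A, goods G (each of supply 1), constraint indices C. *)
Record market (R : realFieldType) (A G C : finType) := Market {
  coef : A -> G -> C -> R;
  req  : A -> C -> R;
  dly  : A -> G -> R;
  bud  : A -> R
}.

Definition wf_market (R : realFieldType) (A G C : finType) (M : market R A G C) :=
  (forall i k, 0 <= req M i k) /\ (forall i j, 0 <= dly M i j) /\ (forall i, 0 < bud M i).

Definition CC (R : realFieldType) (A G C : finType) (M : market R A G C) (i : A) (x : G -> R) :=
  (forall k, \sum_j coef M i j k * x j >= req M i k) /\ (forall j, 0 <= x j).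

Definition cost (R : realFieldType) (A G C : finType) (M : market R A G C) (i : A) (x : G -> R) : R :=
  \sum_j dly M i j * x j.

Definition budget_ok (R : realFieldType) (A G C : finType) (M : market R A G C)
  (p : G -> R) (i : A) (x : G -> R) := \sum_j p j * x j <= bud M i.

Definition market_equilibrium (R : realFieldType) (A G C : finType) (M : market R A G C)
  (X : A -> G -> R) (p : G -> R) :=
  (forall j, \sum_i X i j <= 1) /\
  (forall i, CC M i (X i) /\ budget_ok M p i (X i) /\
     forall y : G -> R, CC M i y -> budget_ok M p i y -> cost M i (X i) <= cost M i y) /\
  (forall j, \sum_i X i j < 1 -> p j = 0).

(* Comparison delay_i(X) <= delay_i(Y) in the extended reals, where
   delay_i(X) = +infinity when X i violates CC(i), and = cost otherwise. *)
Definition delay_le (R : realFieldType) (A G C : finType) (M : market R A G C)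
  (X Y : A -> G -> R) (i : A) : Prop :=
  (~ CC M i (X i) -> ~ CC M i (Y i)) /\
  (CC M i (X i) -> CC M i (Y i) -> cost M i (X i) <= cost M i (Y i)).

From HB Require Import structures.
From mathcomp Require Import all_boot all_order all_algebra.
Import Order.TTheory GRing.Theory Num.Theory.
Local Open Scope ring_scope.

(* By market clearing each price equals the money spent on its good, so the
   total price of all goods is at most the total budget S.  The proportional
   bundle x_ij = m_i / S therefore costs agent i at most m_i: it is affordable
   at the equilibrium prices, and optimality of the equilibrium bundle gives
   the claim whenever the proportional bundle satisfies CC(i). *)

Section EquilibriumRevenue.

Variables (R : realFieldType) (A G C : finType) (M : market R A G C).
Variables (X : A -> G -> R) (p : G -> R).

Hypothesis supply_le1 : forall j, \sum_i X i j <= 1.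
Hypothesis clearing : forall j, \sum_i X i j < 1 -> p j = 0.

Lemma price_eq_spending j : p j = p j * \sum_i X i j.
Proof.
have [undersold | sold_out] := ltrP (\sum_i X i j) 1.
  by rewrite clearing // mul0r.
have -> : \sum_i X i j = 1 by apply/le_anti; rewrite supply_le1 sold_out.
by rewrite mulr1.
Qed.

Lemma total_price_eq_spending :
  \sum_j p j = \sum_i \sum_j p j * X i j.
Proof.
rewrite exchange_big; apply: eq_bigr => j _.
by rewrite {1}price_eq_spending mulr_sumr.
Qed.

Lemma total_price_le_budgets :
  (forall i, budget_ok M p i (X i)) -> \sum_j p j <= \sum_i bud M i.
Proof. by move=> affordable; rewrite total_price_eq_spending; apply: ler_sum => i _; exact: affordable. Qed.

End EquilibriumRevenue.

Lemma proportional_share_affordable (R : realFieldType) (A G C : finType)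
    (M : market R A G C) (p : G -> R) (i : A) :
  (forall i, 0 < bud M i) -> \sum_j p j <= \sum_i bud M i ->
  budget_ok M p i (fun _ => bud M i / \sum_(i' : A) bud M i').
Proof.
move=> bud_gt0 prices_le; set S := \sum_(i' : A) bud M i'.
have S_gt0 : 0 < S.
  by rewrite /S (bigD1 i) //= ltr_pwDl // sumr_ge0 // => k _; apply/ltW.
rewrite /budget_ok -mulr_suml mulrA ler_pdivrMr //.
by rewrite mulrC ler_pM2l.
Qed.

Theorem theoremG3 (R : realFieldType) (A G C : finType) (M : market R A G C)
  (Xs : A -> G -> R) (ps : G -> R) :
  wf_market M ->
  market_equilibrium M Xs ps ->
  let X := fun (i : A) (_ : G) => bud M i / \sum_(i' : A) bud M i' in
  forall i : A, delay_le M Xs X i.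
Proof.
move=> [_ [_ bud_gt0]] [supply_le1 [opt clearing]] X i.
have [CC_Xs _] := opt i.
split=> [not_CC_Xs | _ CC_X]; first by case: not_CC_Xs.
have [_ [_ optimal]] := opt i; apply: optimal CC_X _.
apply: proportional_share_affordable bud_gt0 _.
apply: total_price_le_budgets supply_le1 clearing _ => k.
by have [_ []] := opt k.
Qed.
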